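(* Let $\mathcal{C}$ be a completion-post-effective and $\infty$-completion-effective class of very-WSTS. Then for every $\mathcal{S}=(X,\xrightarrow{\Sigma},\le)\in\mathcal{C}$ and every $x\in X$, the ideal decomposition of $\downarrow\mathrm{Post}^*(x)$ can be computed. In particular, the coverability problem for $\mathcal{C}$ is decidable.
   Context: A (labeled, ordered) transition system is $\mathcal{S}=(X,\xrightarrow{\Sigma},\le)$: $X$ a set, $\Sigma$ finite, $\xrightarrow{a}\subseteq X\times X$ for $a\in\Sigma$, $\le$ a quasi-ordering; relations extend to words. $\mathrm{Post}(x,w)=\{y:x\xrightarrow{w}y\}$, $\mathrm{Post}^*(x)=\bigcup_{w\in\Sigma^*}\mathrm{Post}(x,w)$, extended to sets by union; $\downarrow D=\{x:\exists y\in D,\ x\le y\}$. WSTS: $\le$ wqo and monotone ($x\xrightarrow{a}y$, $x'\ge x$ imply $x'\xrightarrow{w}y'\ge y$ for some $w$). Strong monotonicity: $x\xrightarrow{a}y$, $x'\ge x$ imply $x'\xrightarrow{a}y'$ for some $y'\ge y$; strong-strict: additionally $x'>x$ yields such $y'>y$. Deterministic: at most one $a$-successor. Ideal: nonempty downward-closed directed subset; $\mathrm{Idl}(X)$ the set of ideals. Ideal decomposition of downward-closed $D$ (in a wqo): the finite set of $\subseteq$-maximal ideals included in $D$; $D$ is their union. Completion $\widehat{\mathcal{S}}=(\mathrm{Idl}(X),\Rightarrow_\Sigma,\subseteq)$ with $I\xRightarrow{a}J$ iff $J$ is in the ideal decomposition of $\downarrow\mathrm{Post}(I,a)$. If deterministic,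 $w(I)$ is the unique $J$ with $I\xRightarrow{w}J$. For $w\in\Sigma^+$: $w^\infty(I)=\bigcup_kw^k(I)$ if $I\subset w(I)$, else $I$. Levels: $\mathrm{Idl}_0(X)=\mathrm{Idl}(X)$, $\mathrm{Idl}_n(X)$ = set of unions of strictly increasing sequences in $\mathrm{Idl}_{n-1}(X)$; finitely many levels if some $\mathrm{Idl}_n(X)=\emptyset$. A very-WSTS is a WSTS with strong monotonicity whose completion is a deterministic WSTS ($\subseteq$ a wqo on ideals, monotone) with strong-strict monotonicity, and $\mathrm{Idl}(X)$ has finitely many levels. A class of WSTS is completion-post-effective if (1) ideals can be effectively represented and manipulated, (2) inclusion of ideals is decidable, and (3) the successors of an ideal in the completion, $\{J: I\xRightarrow{a}J\}$, are computable for every ideal $I$ and $a$. It is $\infty$-completion-effective if $w^\infty(I)$ is computable for every ideal $I$ and word $w$. Coverability problem: given $\mathcal{S}$ and $x,y\in X$, decide whether there is $z\ge y$ with $z\in\mathrm{Post}^*(x)$. *)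

(* Computability is modelled by uniform oracle
   programs: coinductive query/answer trees that are parametric in the type of
   ideal codes, run against the oracle operations of an effective class. *)
From mathcomp Require Import all_boot.
Set Implicit Arguments. Unset Strict Implicit. Unset Printing Implicit Defensive.

Definition pset (X : Type) := X -> Prop.

(* list membership (no decidable equality needed) *)
Fixpoint inlist {T : Type} (x : T) (s : seq T) : Prop :=
  match s with [::] => False | y :: s' => y = x \/ inlist x s' end.
Definition sub {X} (A B : pset X) := forall x, A x -> B x.
Definition seteq {X} (A B : pset X) := forall x, A x <-> B x.
Definition strict {X} (A B : pset X) := sub A B /\ ~ sub B A.

Definition wqo_on {T} (P : T -> Prop) (r : T -> T -> Prop) :=
  (forall x, P x -> r x x) /\
  (forall x y z, P x -> P y -> P z -> r x y -> r y z -> r x z) /\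
  (forall f : nat -> T, (forall k, P (f k)) -> exists i j, (i < j)%N /\ r (f i) (f j)).

Section TS.
Variables (X : Type) (Sig : finType) (step : Sig -> X -> X -> Prop)
          (le : X -> X -> Prop).

Fixpoint stepw (w : seq Sig) (x y : X) : Prop :=
  match w with
  | [::] => x = y
  | a :: w' => exists z, step a x z /\ stepw w' z y
  end.

Definition reach (x : X) : pset X := fun y => exists w, stepw w x y.
Definition post (I : pset X) (a : Sig) : pset X := fun y => exists x, I x /\ step a x y.
Definition dc (D : pset X) : pset X := fun x => exists y, D y /\ le x y.

Definition down_closed (D : pset X) := forall x y, D y -> le x y -> D x.
Definition directed (D : pset X) :=
  forall x y, D x -> D y -> exists z, D z /\ le x z /\ le y z.
Definition ideal (I : pset X) := (exists x, I x) /\ down_closed I /\ directed I.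

Definition in_idecomp (D : pset X) (I : pset X) :=
  ideal I /\ sub I D /\ (forall J, ideal J -> sub I J -> sub J D -> sub J I).

Definition cstep (a : Sig) (I J : pset X) := ideal I /\ in_idecomp (dc (post I a)) J.
Fixpoint cstepw (w : seq Sig) (I J : pset X) : Prop :=
  match w with
  | [::] => seteq I J
  | a :: w' => exists K, cstep a I K /\ cstepw w' K J
  end.

Definition winf (w : seq Sig) (I K : pset X) :=
  let grows := exists J, cstepw w I J /\ strict I J in
  (grows -> seteq K (fun x => exists k J, cstepw (flatten (nseq k w)) I J /\ J x)) /\
  (~ grows -> seteq K I).

Fixpoint level (n : nat) : pset X -> Prop :=
  match n with
  | 0 => ideal
  | n'.+1 => fun I => exists f : nat -> pset X,
       (forall k, level n' (f k)) /\ (forall k, strict (f k) (f k.+1)) /\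
       seteq I (fun x => exists k, f k x)
  end.

Definition very_wsts :=
  wqo_on (fun _ => True) le /\
  (forall a x y x', step a x y -> le x x' -> exists w y', stepw w x' y' /\ le y y') /\
  (forall a x y x', step a x y -> le x x' -> exists y', step a x' y' /\ le y y') /\
  (forall a I J1 J2, cstep a I J1 -> cstep a I J2 -> seteq J1 J2) /\
  wqo_on ideal sub /\
  (forall a I J I', cstep a I J -> ideal I' -> sub I I' ->
     exists w J', cstepw w I' J' /\ sub J J') /\
  (forall a I J I', cstep a I J -> ideal I' -> sub I I' ->
     exists J', cstep a I' J' /\ sub J J') /\
  (forall a I J I', cstep a I J -> ideal I' -> strict I I' ->
     exists J', cstep a I' J' /\ strict J J') /\
  (exists n, forall I, ~ level n I).

(* effective representation of ideals by codes of type C, with the oracle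
   operations of a completion-post-effective, infty-completion-effective class *)
Record effective (C : Type) := Effective {
  den : C -> pset X;
  den_ideal : forall c, ideal (den c);
  den_onto : forall I, ideal I -> exists c, seteq (den c) I;
  incl : C -> C -> bool;
  inclP : forall c d, incl c d = true <-> sub (den c) (den d);
  succ : C -> Sig -> seq C;
  succ_sound : forall c a d, inlist d (succ c a) -> cstep a (den c) (den d);
  succ_complete : forall c a J, cstep a (den c) J ->
                    exists d, inlist d (succ c a) /\ seteq (den d) J;
  accel : C -> seq Sig -> C;
  accelP : forall c w, w <> [::] -> winf w (den c) (den (accel c w))
}.

End TS.

CoInductive prog (Sig C R : Type) : Type :=
| Ret (r : R)
| AskIncl (c d : C) (k : bool -> prog Sig C R)
| AskSucc (c : C) (a : Sig) (k : seq C -> prog Sig C R)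
| AskAccel (c : C) (w : seq Sig) (k : C -> prog Sig C R).

Arguments Ret {Sig C R}.
Arguments AskIncl {Sig C R}.
Arguments AskSucc {Sig C R}.
Arguments AskAccel {Sig C R}.

Inductive runs {Sig C R : Type} (incl : C -> C -> bool) (succ : C -> Sig -> seq C)
    (accel : C -> seq Sig -> C) : prog Sig C R -> R -> Prop :=
| runs_ret r : runs incl succ accel (Ret r) r
| runs_incl c d k r : runs incl succ accel (k (incl c d)) r ->
                      runs incl succ accel (AskIncl c d k) r
| runs_succ c a k r : runs incl succ accel (k (succ c a)) r ->
                      runs incl succ accel (AskSucc c a k) r
| runs_accel c w k r : runs incl succ accel (k (accel c w)) r ->
                       runs incl succ accel (AskAccel c w k) r.

Definition codes_idecomp {X C : Type} (le : X -> X -> Prop) (den : C -> pset X)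
    (D : pset X) (r : seq C) :=
  (forall d, inlist d r -> in_idecomp le D (den d)) /\
  (forall I, in_idecomp le D I -> exists d, inlist d r /\ seteq (den d) I).

(* The algorithm enumerates, round by round, the codes generated from the code
   of ↓x by the successor oracle and by accelerations along nonempty words, and
   stops at the first round whose codes [t] are closed under successors up to
   inclusion. Then the ideals of [t] cover ↓Post*(x), by induction along runs,
   and lie inside it; since ideals are prime, the inclusion-maximal ones form
   the ideal decomposition.
   Such a round exists. In the tree of generated codes, prune every code that
   is included in one of its ancestors; by downward induction on levels, every
   code has a finite closed cover below it. Indeed an infinite unpruned branch
   contains, inclusion being a wqo on ideals, a code I strictly included in a
   descendant J; accelerating I along the word that leads to J gives an ideal
   of higher level containing J, which is covered by induction hypothesis. *)

From mathcomp Require Import all_boot.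
From Stdlib Require Import Classical ChoiceFacts IndefiniteDescription.
From Stdlib Require Import FunctionalExtensionality PropExtensionality.
Set Implicit Arguments. Unset Strict Implicit. Unset Printing Implicit Defensive.

Lemma seteq_eq {X : Type} (A B : pset X) : seteq A B -> A = B.
Proof.
by move=> AB; apply: functional_extensionality => x; apply: propositional_extensionality.
Qed.

Lemma dependent_choice {S : Type} (P : S -> Prop) (R : S -> S -> Prop) (s0 : S) :
  P s0 -> (forall s, P s -> exists s', P s' /\ R s s') ->
  exists f : nat -> S, f 0 = s0 /\ forall k, P (f k) /\ R (f k) (f k.+1).
Proof.
move=> P0 next.
have [|f [f0 fR]] := functional_choice_imp_functional_dependent_choice functional_choice
  (fun s s' : {s | P s} => R (sval s) (sval s')) _ (exist _ s0 P0).
  by move=> [s Ps]; have [s' [Ps' Rs']] := next s Ps; exists (exist _ s' Ps').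
by exists (fun k => sval (f k)); rewrite f0; split=> // k; split; [exact: svalP | exact: fR].
Qed.

Lemma inlistP {T : eqType} (x : T) s : reflect (inlist x s) (x \in s).
Proof.
elim: s => [|y s IH]; first by constructor.
by rewrite inE eq_sym; apply: (iffP orP) => -[h|h]; by [left; apply/eqP | right; apply/IH].
Qed.

Section Inlist.
Variable T : Type.
Implicit Types (x : T) (s : seq T).

Lemma inlist_cat x s1 s2 : inlist x (s1 ++ s2) <-> inlist x s1 \/ inlist x s2.
Proof. by elim: s1 => [|y s IH] /=; [tauto | rewrite IH; tauto]. Qed.

Lemma inlist_map {U : Type} (f : U -> T) x (s : seq U) :
  inlist x (map f s) <-> exists y, inlist y s /\ x = f y.
Proof.
elim: s => [|y s IH] /=; first by split=> [[]|[? []]].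
rewrite IH; split.
- by case=> [<-|[z [zs ->]]]; [exists y; split; first left | exists z; split; first right].
- by case=> z [[<-|zs] ->]; [left | right; exists z].
Qed.

Lemma inlist_flatten x (ss : seq (seq T)) :
  inlist x (flatten ss) <-> exists s, inlist s ss /\ inlist x s.
Proof.
elim: ss => [|s ss IH] /=; first by split=> [[]|[? []]].
rewrite inlist_cat IH; split.
- by case=> [xs|[t [tss xt]]]; [exists s; split; first left | exists t; split; first right].
- by case=> t [[<-|tss] xt]; [left | right; exists t].
Qed.

Lemma inlist_filter (p : pred T) x s : inlist x (filter p s) <-> inlist x s /\ p x.
Proof.
elim: s => [|y s IH] /=; first by tauto.
by case: ifP => py /=; rewrite IH; split; intuition (subst; congruence).
Qed.

Lemma all_inlistP (p : pred T) s : all p s <-> forall x, inlist x s -> p x.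
Proof.
elim: s => [|y s IH] //=; rewrite -(rwP andP) IH.
by split=> [[py ps] x [<-|/ps]|h] //; split=> [|x xs]; apply: h; [left | right].
Qed.

Lemma has_inlistP (p : pred T) s : has p s <-> exists x, inlist x s /\ p x.
Proof.
elim: s => [|y s IH] /=; first by split=> // -[? []].
rewrite -(rwP orP) IH; split.
- by case=> [py|[x [xs px]]]; [exists y; split; first left | exists x; split; first right].
- by case=> x [[<-|xs] px]; [left | right; exists x].
Qed.

Lemma exists_maximal (r : T -> T -> Prop) s :
  (forall x, r x x) -> (forall x y z, r x y -> r y z -> r x z) ->
  forall x, (exists y, inlist y s /\ r x y) ->
  exists m, [/\ inlist m s, r x m & forall y, inlist y s -> r m y -> r y m].
Proof.
move=> rr rt; elim: s => [|h s IH] x [y [//= ys xy]].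
have [xh|nxh] := classic (r x h).
- have [[z [zs hz]]|nhz] := classic (exists z, inlist z s /\ r h z).
  + have [m [ms hm mmax]] := IH h (ex_intro _ z (conj zs hz)).
    exists m; split; [by right | exact: rt xh hm |].
    by move=> u [<- _|us]; [| exact: mmax].
  + exists h; split=> //; first by left.
    by move=> u [<-|us] hu //; case: nhz; exists u.
- have {}ys : inlist y s by case: ys => // e; subst.
  have [m [ms xm mmax]] := IH x (ex_intro _ y (conj ys xy)).
  exists m; split=> //; first by right.
  by move=> u [<- /(rt _ _ _ xm)|us] //; apply: mmax.
Qed.

End Inlist.

Section Ideals.
Variables (X : Type) (le : X -> X -> Prop).
Local Notation ideal := (ideal le).
Local Notation down_closed := (down_closed le).

Definition finite_ideal_cover {T : Type} (f : T -> pset X) (l : seq T) (D : pset X) :=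
  (forall e, inlist e l -> ideal (f e) /\ sub (f e) D) /\
  (forall y, D y -> exists e, inlist e l /\ f e y).

Definition maximal_in {T : Type} (f : T -> pset X) (l : seq T) (e : T) :=
  forall e', inlist e' l -> sub (f e) (f e') -> sub (f e') (f e).

Lemma ideal_prime {T : Type} (f : T -> pset X) (l : seq T) (J : pset X) :
  ideal J -> (forall e, inlist e l -> down_closed (f e)) ->
  (forall y, J y -> exists e, inlist e l /\ f e y) ->
  exists e, inlist e l /\ sub J (f e).
Proof.
move=> [[j0 Jj0] [Jdc Jdir]]; elim: l => [|h l IH] /= fdc Jcov.
  by have [e []] := Jcov _ Jj0.
have [Jh|[x0 [Jx0 nhx0]]] : sub J (f h) \/ exists x0, J x0 /\ ~ f h x0.
  by apply: NNPP => /not_or_and [nJh nx]; apply: nJh => y Jy; apply: NNPP => ?; apply: nx; exists y.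
  by exists h; split; first left.
have [|y Jy|e [el Je]] := IH; first by move=> e el; apply: fdc; right.
  have [z [Jz [x0z yz]]] := Jdir _ _ Jx0 Jy.
  have [e [[<-|el] ez]] := Jcov _ Jz; first by case: nhx0; apply: fdc ez x0z; left.
  by exists e; split=> //; apply: fdc ez yz; right.
by exists e; split; first right.
Qed.

Section FiniteCover.
Variables (T : Type) (f : T -> pset X) (l : seq T) (D : pset X).
Hypothesis lD : finite_ideal_cover f l D.

Lemma exists_maximal_in e : inlist e l ->
  exists m, [/\ inlist m l, sub (f e) (f m) & maximal_in f l m].
Proof.
move=> el; apply: (@exists_maximal _ (fun e e' => sub (f e) (f e'))).
- by move=> ? ?.
- by move=> ? ? ? h1 h2 y /h1 /h2.
- by exists e; split.
Qed.

Lemma maximal_in_idecomp e : inlist e l -> maximal_in f l e -> in_idecomp le D (f e).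
Proof.
move=> el emax; have [fe feD] := lD.1 e el; split=> //; split=> // J Ji eJ JD.
have [e' /lD.1 [[_ []]] //|y /JD /lD.2 //|e' [e'l Je']] := @ideal_prime _ f l J Ji.
by move=> y Jy; apply: (emax e' e'l _ y (Je' y Jy)) => z /eJ /Je'.
Qed.

Lemma idecomp_maximal_in I : in_idecomp le D I ->
  exists e, [/\ inlist e l, maximal_in f l e & f e = I].
Proof.
move=> [Ii [ID Imax]].
have [e' /lD.1 [[_ []]] //|y /ID /lD.2 //|e [el Ie]] := @ideal_prime _ f l I Ii.
have [m [ml em mmax]] := exists_maximal_in el.
exists m; split=> //; apply: seteq_eq => y; split; last by move/Ie/em.
by apply: Imax (proj1 (lD.1 m ml)) _ (proj2 (lD.1 m ml)) y => z /Ie /em.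
Qed.

End FiniteCover.

Hypothesis le_wqo : wqo_on (fun _ => True) le.

Definition finitely_covered (D : pset X) := exists L, finite_ideal_cover id L D.

Definition minus_up (D : pset X) (x : X) : pset X := fun z => D z /\ ~ le x z.

Lemma down_closed_minus_up D x : down_closed D -> down_closed (minus_up D x).
Proof.
have [_ [le_trans _]] := le_wqo.
move=> Ddc u v [Dv nxv] uv; split=> [|xu]; first exact: Ddc Dv uv.
by apply: nxv; apply: le_trans xu uv.
Qed.

(* A down-closed set is either empty, directed (hence an ideal), or the union
   of [minus_up D x] and [minus_up D y] for two elements without common upper
   bound in [D]. *)
Lemma not_finitely_covered_split D : down_closed D -> ~ finitely_covered D ->
  exists x, D x /\ ~ finitely_covered (minus_up D x).
Proof.
move=> Ddc Dnfc; apply: NNPP => /not_ex_all_not Hsplit.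
have fc x : D x -> finitely_covered (minus_up D x).
  by move=> Dx; apply: NNPP => nfc; apply: (Hsplit x).
have [[x0 Dx0]|Dempty] := classic (exists x, D x); last first.
  by apply: Dnfc; exists [::]; split=> // y Dy; case: Dempty; exists y.
have [Ddir|] := classic (directed le D).
  apply: Dnfc; exists [:: D]; split=> [I [<-|[]]|y Dy]; last by exists D; split; first left.
  by split=> //; split; [exists x0 | split].
move=> /not_all_ex_not [x /not_all_ex_not [y Dxy]].
have [Dx [Dy nub]] : D x /\ D y /\ ~ exists z, D z /\ le x z /\ le y z.
  by apply: NNPP => H; apply: Dxy => Dx Dy; apply: NNPP => nz; apply: H.
have [[Lx [Lx1 Lx2]] [Ly [Ly1 Ly2]]] := (fc x Dx, fc y Dy).
apply: Dnfc; exists (Lx ++ Ly); split=> [I /inlist_cat [/Lx1|/Ly1] [Ii ID]|z Dz].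
- by split=> // z /ID [].
- by split=> // z /ID [].
have [xz|nxz] := classic (le x z); last first.
  by have [I [IL Iz]] := Lx2 z (conj Dz nxz); exists I; split=> //; apply/inlist_cat; left.
have [yz|nyz] := classic (le y z); first by case: nub; exists z.
by have [I [IL Iz]] := Ly2 z (conj Dz nyz); exists I; split=> //; apply/inlist_cat; right.
Qed.

(* Iterating [not_finitely_covered_split] from a non-covered [D] yields a bad sequence. *)
Lemma down_closed_finitely_covered D : down_closed D -> finitely_covered D.
Proof.
move=> Ddc; apply: NNPP => Dnfc.
pose P (s : X * pset X) := [/\ s.2 s.1, down_closed s.2 & ~ finitely_covered (minus_up s.2 s.1)].
pose R (s s' : X * pset X) := s'.2 = minus_up s.2 s.1.
have [x0 [Dx0 nfc0]] := not_finitely_covered_split Ddc Dnfc.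
have P0 : P (x0, D) by split.
have next s : P s -> exists s', P s' /\ R s s'.
  case: s => x E [/= Ex Edc Enfc].
  have [x' [Ex' nfc']] := not_finitely_covered_split (@down_closed_minus_up E x Edc) Enfc.
  by exists (x', minus_up E x); split=> //; split=> //; apply: down_closed_minus_up.
have [s [_ sPR]] := dependent_choice P0 next.
have below i n : sub (s (i.+1 + n)).2 (minus_up (s i).2 (s i).1).
  elim: n => [|n IH] z; first by rewrite addn0 (proj2 (sPR i)).
  by rewrite addnS (proj2 (sPR _)) => -[/IH].
have [i [j [ij le_ij]]] := le_wqo.2.2 (fun k => (s k).1) (fun _ => I).
have sj : (s (i.+1 + (j - i.+1))).2 (s j).1 by rewrite subnKC //; case: (sPR j) => -[].
by have [_] := below i _ _ sj.
Qed.

Lemma idecomp_exists D y : down_closed D -> D y -> exists I, in_idecomp le D I /\ I y.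
Proof.
move=> /down_closed_finitely_covered [L LD] Dy.
have [I0 [I0L I0y]] := LD.2 y Dy.
have [m [mL I0m mmax]] := exists_maximal_in id I0L.
by exists m; split; [exact: (maximal_in_idecomp LD mL mmax) | exact: I0m].
Qed.

Lemma codes_idecomp_cover {C : Type} (den : C -> pset X) D r :
  down_closed D -> codes_idecomp le den D r ->
  forall y, D y <-> exists d, inlist d r /\ den d y.
Proof.
move=> Ddc [rD Dr] y; split=> [/(idecomp_exists Ddc) [I [DI Iy]]|[d [dr dy]]].
  by have [d [dr /seteq_eq dI]] := Dr I DI; exists d; rewrite dI.
by have [_ [dD _]] := rD d dr; apply: dD.
Qed.

End Ideals.

Lemma stepw_cat (X : Type) (Sig : finType) (step : Sig -> X -> X -> Prop) w1 w2 x y z :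
  stepw step w1 x y -> stepw step w2 y z -> stepw step (w1 ++ w2) x z.
Proof.
elim: w1 x => [|a w IH] x /=; first by move=> ->.
by case=> u [xu uy] yz; exists u; split=> //; apply: IH yz.
Qed.

Section Completion.
Variables (X : Type) (Sig : finType) (step : Sig -> X -> X -> Prop) (le : X -> X -> Prop).
Hypothesis HV : very_wsts step le.
Local Notation ideal := (ideal le).
Local Notation dc := (dc le).
Local Notation post := (post step).
Local Notation cstep := (cstep step le).
Local Notation cstepw := (cstepw step le).
Local Notation level := (level le).

Lemma vwsts_wqo : wqo_on (fun _ => True) le.
Proof. by case: HV. Qed.

Lemma vwsts_monotone a x y x' :
  step a x y -> le x x' -> exists w y', stepw step w x' y' /\ le y y'.
Proof. by case: HV => _ [mon _]; apply: mon. Qed.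

Lemma vwsts_cstep_det a I J1 J2 : cstep a I J1 -> cstep a I J2 -> seteq J1 J2.
Proof. by case: HV => _ [_ [_ [det _]]]; apply: det. Qed.

Lemma vwsts_ideal_wqo (f : nat -> pset X) :
  (forall k, ideal (f k)) -> exists i j, (i < j)%N /\ sub (f i) (f j).
Proof. by case: HV => _ [_ [_ [_ [[_ [_ iwqo]] _]]]]; apply: iwqo. Qed.

Lemma vwsts_cstep_strict a I J I' :
  cstep a I J -> ideal I' -> strict I I' -> exists J', cstep a I' J' /\ strict J J'.
Proof. by case: HV => _ [_ [_ [_ [_ [_ [_ [sstrict _]]]]]]]; apply: sstrict. Qed.

Lemma vwsts_levels : exists n, forall I, ~ level n I.
Proof. by case: HV => _ [_ [_ [_ [_ [_ [_ [_ lev]]]]]]]. Qed.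

Lemma le_refl x : le x x.
Proof. by case: vwsts_wqo => refl _; apply: refl. Qed.

Lemma le_trans x y z : le x y -> le y z -> le x z.
Proof. by case: vwsts_wqo => _ [trans _]; apply: trans. Qed.

Lemma down_closed_dc D : down_closed le (dc D).
Proof. by move=> u v [z [Dz vz]] uv; exists z; split=> //; apply: le_trans uv vz. Qed.

Lemma cstep_ideal a I J : cstep a I J -> ideal J.
Proof. by case=> _ []. Qed.

Lemma cstep_exists a I z : ideal I -> post I a z -> exists J, cstep a I J /\ J z.
Proof.
move=> Ii Iaz; have Iaz' : dc (post I a) z by exists z; split=> //; apply: le_refl.
by have [J [HJ Jz]] := idecomp_exists vwsts_wqo (@down_closed_dc _) Iaz'; exists J.
Qed.

(* By determinism [dc (post I a)] has a single maximal ideal, hence is one. *)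
Lemma cstepE a I J : cstep a I J -> J = dc (post I a).
Proof.
move=> IJ; apply: seteq_eq => y; split; first by case: IJ => _ [_ [JD _]]; apply: JD.
move=> Iay; have [M [HM My]] := idecomp_exists vwsts_wqo (@down_closed_dc (post I a)) Iay.
by apply/(vwsts_cstep_det IJ (conj (proj1 IJ) HM)).
Qed.

Lemma cstep_dc a I z : ideal I -> post I a z -> cstep a I (dc (post I a)).
Proof. by move=> Ii /(cstep_exists Ii) [J [IJ _]]; rewrite -(cstepE IJ). Qed.

Lemma cstepw_ideal w I J : ideal I -> cstepw w I J -> ideal J.
Proof.
elim: w I => [|a w IH] I /= Ii; first by move/seteq_eq <-.
by case=> K [IK KJ]; apply: IH KJ; apply: cstep_ideal IK.
Qed.

Lemma cstepw_cat w1 w2 I K J : cstepw w1 I K -> cstepw w2 K J -> cstepw (w1 ++ w2) I J.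
Proof.
elim: w1 I => [|a w IH] I /=; first by move/seteq_eq ->.
by case=> K0 [IK0 K0K] KJ; exists K0; split=> //; apply: IH KJ.
Qed.

Lemma cstepw_det w I J J' : cstepw w I J -> cstepw w I J' -> J = J'.
Proof.
elim: w I => [|a w IH] I /=; first by move=> /seteq_eq <- /seteq_eq.
by case=> K [IK KJ] [K' [IK' K'J']]; apply: IH KJ _; rewrite (cstepE IK) -(cstepE IK').
Qed.

Lemma cstepw_strict w I J I' :
  cstepw w I J -> ideal I' -> strict I I' -> exists J', cstepw w I' J' /\ strict J J'.
Proof.
elim: w I I' => [|a w IH] I I' /=; first by move=> /seteq_eq <- _ II'; exists I'.
case=> K [IK KJ] I'i II'; have [K' [I'K' KK']] := vwsts_cstep_strict IK I'i II'.
have [J' [K'J' JJ']] := IH _ _ KJ (cstep_ideal I'K') KK'.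
by exists J'; split=> //; exists K'.
Qed.

Lemma sub_chain (f : nat -> pset X) : (forall k, sub (f k) (f k.+1)) ->
  forall i j, (i <= j)%N -> sub (f i) (f j).
Proof.
move=> fS i j /subnK <-; elim: (j - i) => [|n IH] x; first by [].
by rewrite addSn => /IH /fS.
Qed.

Lemma ideal_union_chain (f : nat -> pset X) :
  (forall k, ideal (f k)) -> (forall k, sub (f k) (f k.+1)) -> ideal (fun x => exists k, f k x).
Proof.
move=> fi fS; split; first by have [[x fx] _] := fi 0; exists x, 0.
split=> [u v [k fkv] uv|u v [i fiu] [j fjv]].
  by exists k; case: (fi k) => _ [dc _]; apply: dc fkv uv.
have fu := sub_chain fS (leq_maxl i j) fiu; have fv := sub_chain fS (leq_maxr i j) fjv.
have [z [fz [uz vz]]] := (fi (maxn i j)).2.2 u v fu fv.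
by exists z; split=> //; exists (maxn i j).
Qed.

Lemma level_ideal m I : level m I -> ideal I.
Proof.
elim: m I => [|m IH] I //= [f [fl [fS /seteq_eq ->]]].
by apply: ideal_union_chain => k; [apply: IH | case: (fS k)].
Qed.

Lemma level_down m I : level m.+1 I -> level m I.
Proof.
elim: m I => [|m IH] I; first exact: level_ideal.
by case=> f [fl fI]; exists f; split=> // k; apply: IH.
Qed.

Lemma level_le m n I : (m <= n)%N -> level n I -> level m I.
Proof. by move=> /subnK <-; elim: (n - m) => [|k IH] //; rewrite addSn => /level_down. Qed.

Lemma level_cstep m a I J : cstep a I J -> level m I -> level m J.
Proof.
elim: m a I J => [|m IH] a I J IJ; first by move=> _; apply: cstep_ideal IJ.
case=> f [fl [fS /seteq_eq EI]]; subst I.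
have fi k : ideal (f k) by apply: level_ideal (fl k).
have fS' k : sub (f k) (f k.+1) by case: (fS k).
have EJ := cstepE IJ; subst J.
have [y0 [z0 [[x0 [[k0 fx0] x0z0]] _]]] := (cstep_ideal IJ).1.
pose g k := dc (post (f (k + k0)) a).
have fg k : cstep a (f (k + k0)) (g k).
  apply: (cstep_dc (fi _) (z := z0)); exists x0; split=> //.
  exact: (sub_chain fS' (leq_addl k k0) fx0).
exists g; split; first by move=> k; apply: IH (fg k) (fl _).
split=> [k|y].
  have [J' [fJ' gJ']] := vwsts_cstep_strict (fg k) (fi _) (fS (k + k0)).
  by rewrite (cstepE fJ') -addSn in gJ'.
split=> [[z [[x [[k fx] xz]] yz]]|[k [z [[x [fx xz]] yz]]]].
- exists k, z; split=> //; exists x; split=> //; exact: (sub_chain fS' (leq_addr k0 k) fx).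
- by exists z; split=> //; exists x; split=> //; exists (k + k0).
Qed.

Lemma level_cstepw m w I J : cstepw w I J -> level m I -> level m J.
Proof.
elim: w I => [|a w IH] I /=; first by move/seteq_eq <-.
by case=> K [IK KJ] /(level_cstep IK) /(IH _ KJ).
Qed.

(* Strong-strict monotonicity makes the iterates of [w] on [I] a strictly
   increasing chain of ideals of level [m], and [K] is its union. *)
Lemma level_winf m w I K : level m I -> winf step le w I K ->
  (exists J, cstepw w I J /\ strict I J) -> level m.+1 K.
Proof.
move=> lI [wK _] grows; have /seteq_eq -> := wK grows; case: grows => J1 [IJ1 II1].
have Ii := level_ideal lI.
have iterate k I0 J0 : ideal I0 -> cstepw w I0 J0 -> strict I0 J0 ->
    exists J, cstepw (flatten (nseq k w)) I0 J.
  elim: k I0 J0 => [|k IH] I0 J0 I0i I0J0 sI0J0; first by exists I0.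
  have J0i := cstepw_ideal I0i I0J0.
  have [J2 [J0J2 sJ0J2]] := cstepw_strict I0J0 J0i sI0J0.
  by have [J J0J] := IH _ _ J0i J0J2 sJ0J2; exists J; apply: cstepw_cat I0J0 J0J.
have [g Ig] := functional_choice _ (fun k => iterate k I J1 Ii IJ1 II1).
exists g; split; first by move=> k; apply: level_cstepw (Ig k) lI.
split=> [k|y].
  have [J' [J1J' sgJ']] := cstepw_strict (Ig k) (cstepw_ideal Ii IJ1) II1.
  by rewrite (cstepw_det (cstepw_cat IJ1 J1J') (Ig k.+1)) in sgJ'.
split=> [[k [J [IJ Jy]]]|[k gy]]; last by exists k, (g k).
by exists k; rewrite -(cstepw_det IJ (Ig k)).
Qed.

End Completion.

Section OraclePrograms.
Variables (Sig : finType) (C : Type).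

(* Terminating oracle computations; [prog] adds the possibility of running
   forever, which [search] needs. *)
Inductive comp (A : Type) : Type :=
| Pure (r : A)
| QIncl (c d : C) (k : bool -> comp A)
| QSucc (c : C) (a : Sig) (k : seq C -> comp A)
| QAccel (c : C) (w : seq Sig) (k : C -> comp A).
Arguments Pure {A}.

Fixpoint bind {A B} (m : comp A) (f : A -> comp B) : comp B :=
  match m with
  | Pure r => f r
  | QIncl c d k => QIncl c d (fun b => bind (k b) f)
  | QSucc c a k => QSucc c a (fun s => bind (k s) f)
  | QAccel c w k => QAccel c w (fun e => bind (k e) f)
  end.

Definition inclM c d : comp bool := QIncl c d Pure.
Definition succM c a : comp (seq C) := QSucc c a Pure.
Definition accelM c w : comp C := QAccel c w Pure.

Fixpoint mapM {A B} (f : A -> comp B) (s : seq A) : comp (seq B) :=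
  if s is x :: s' then bind (f x) (fun y => bind (mapM f s') (fun ys => Pure (y :: ys)))
  else Pure [::].

Definition allM {A} (f : A -> comp bool) (s : seq A) : comp bool :=
  bind (mapM f s) (fun bs => Pure (all id bs)).
Definition hasM {A} (f : A -> comp bool) (s : seq A) : comp bool :=
  bind (mapM f s) (fun bs => Pure (has id bs)).

Section Eval.
Variables (inc : C -> C -> bool) (sc : C -> Sig -> seq C) (ac : C -> seq Sig -> C).

Fixpoint eval {A} (m : comp A) : A :=
  match m with
  | Pure r => r
  | QIncl c d k => eval (k (inc c d))
  | QSucc c a k => eval (k (sc c a))
  | QAccel c w k => eval (k (ac c w))
  end.

Lemma eval_bind {A B} (m : comp A) (f : A -> comp B) : eval (bind m f) = eval (f (eval m)).
Proof. by elim: m => //= *. Qed.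

Lemma eval_mapM {A B} (f : A -> comp B) s : eval (mapM f s) = map (fun x => eval (f x)) s.
Proof. by elim: s => //= x s IH; rewrite !eval_bind IH. Qed.

Lemma eval_allM {A} (f : A -> comp bool) s : eval (allM f s) = all (fun x => eval (f x)) s.
Proof. by rewrite eval_bind eval_mapM all_map. Qed.

Lemma eval_hasM {A} (f : A -> comp bool) s : eval (hasM f s) = has (fun x => eval (f x)) s.
Proof. by rewrite eval_bind eval_mapM has_map. Qed.

End Eval.

Section Search.
Variables (R : Type) (c0 : C) (body : nat -> comp (option R)).

(* Runs [body 0], [body 1], ... until one of them returns [Some r]; the dummy
   query [incl c0 c0] guards the corecursive call. *)
CoFixpoint search (n : nat) (m : comp (option R)) : prog Sig C R :=
  match m with
  | Pure (Some r) => Ret r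
  | Pure None => AskIncl c0 c0 (fun _ => search n.+1 (body n.+1))
  | QIncl c d k => AskIncl c d (fun b => search n (k b))
  | QSucc c a k => AskSucc c a (fun s => search n (k s))
  | QAccel c w k => AskAccel c w (fun e => search n (k e))
  end.

Definition prog_unfold (p : prog Sig C R) : prog Sig C R :=
  match p with
  | Ret r => Ret r
  | AskIncl c d k => AskIncl c d k
  | AskSucc c a k => AskSucc c a k
  | AskAccel c w k => AskAccel c w k
  end.

Lemma prog_unfoldE p : prog_unfold p = p.
Proof. by case: p. Qed.

Variables (inc : C -> C -> bool) (sc : C -> Sig -> seq C) (ac : C -> seq Sig -> C).
Local Notation eval := (eval inc sc ac).
Local Notation runs := (runs inc sc ac).

Lemma runs_search n m r :
  eval m = Some r \/ (eval m = None /\ runs (search n.+1 (body n.+1)) r) ->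
  runs (search n m) r.
Proof.
elim: m => [[r'|]|c d k IH|c a k IH|c w k IH] /= h; rewrite -[search n _]prog_unfoldE /=.
- by case: h => [[->]|[]] //; constructor.
- by case: h => [|[_ h]] //; constructor.
- by constructor; apply: IH.
- by constructor; apply: IH.
- by constructor; apply: IH.
Qed.

Lemma runs_search_first (P : R -> Prop) :
  (forall n r, eval (body n) = Some r -> P r) -> (exists N, eval (body N) <> None) ->
  exists r, runs (search 0 (body 0)) r /\ P r.
Proof.
move=> bodyP [N bodyN].
have found n r : eval (body n) = Some r -> exists r, runs (search n (body n)) r /\ P r.
  by move=> nr; exists r; split; [apply: runs_search; left | exact: bodyP nr].
suff: forall k n, N = n + k -> exists r, runs (search n (body n)) r /\ P r by apply.
elim=> [|k IH] n eN; case nr: (eval (body n)) => [r|]; try exact: found nr.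
  by rewrite eN addn0 nr in bodyN.
have [|r [nr' Pr]] := IH n.+1; first by rewrite eN addSnnS.
by exists r; split=> //; apply: runs_search; right.
Qed.

End Search.
End OraclePrograms.
Arguments Pure {Sig C A}.
Arguments inclM {Sig C}.

Section Algorithm.
Variables (Sig : finType) (C : Type) (cx : C).
Local Notation comp := (comp Sig C).

Fixpoint words_of_size (n : nat) : seq (seq Sig) :=
  if n is n'.+1 then [seq a :: w | a <- enum Sig, w <- words_of_size n'] else [:: [::]].

Definition words (n : nat) : seq (seq Sig) := flatten [seq words_of_size k.+1 | k <- iota 0 n].

Lemma mem_words_of_size n w : (w \in words_of_size n) = (size w == n).
Proof.
elim: n w => [|n IH] w; first by case: w.
apply/allpairsP/idP => [[[a v] [_ /= vn ->]]|]; first by rewrite /= eqSS -IH.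
by case: w => [|a v] //= vn; exists (a, v); rewrite /= mem_enum IH.
Qed.

Lemma mem_words n w : (w \in words n) = (0 < size w <= n).
Proof.
apply/flatten_mapP/idP => [[k]|/andP [w0 wn]].
  by rewrite mem_iota mem_words_of_size add0n => kn /eqP ->.
by exists (size w).-1; rewrite ?mem_iota ?mem_words_of_size prednK.
Qed.

Definition succsM (c : C) : comp (seq C) :=
  bind (mapM (succM c) (enum Sig)) (fun ss => Pure (flatten ss)).

Definition expandM (n : nat) (t : seq C) : comp (seq C) :=
  bind (mapM succsM t) (fun ks =>
  bind (mapM (fun c => mapM (accelM c) (words n)) t) (fun accs =>
  Pure (t ++ flatten ks ++ flatten accs))).

Fixpoint codesM (n : nat) : comp (seq C) :=
  if n is n'.+1 then bind (codesM n') (expandM n) else Pure [:: cx].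

Definition closedM (t : seq C) : comp bool :=
  bind (mapM succsM t) (fun ks => allM (fun d => hasM (inclM d) t) (flatten ks)).

Definition maximalM (t : seq C) (c : C) : comp bool :=
  allM (fun e => bind (inclM c e) (fun b => if b then inclM e c else Pure true)) t.

Definition decomp_round (n : nat) : comp (option (seq C)) :=
  bind (codesM n) (fun t => bind (closedM t) (fun ok =>
  if ok then bind (mapM (maximalM t) t) (fun bs => Pure (Some (mask bs t))) else Pure None)).

Definition cover_round (cy : C) (n : nat) : comp (option bool) :=
  bind (decomp_round n) (fun o =>
  if o is Some out then bind (hasM (inclM cy) out) (fun b => Pure (Some b)) else Pure None).

Definition decomp_prog : prog Sig C (seq C) := search cx decomp_round 0 (decomp_round 0).

Definition cover_prog (cy : C) : prog Sig C bool := search cx (cover_round cy) 0 (cover_round cy 0).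

Section Values.
Variables (inc : C -> C -> bool) (sc : C -> Sig -> seq C) (ac : C -> seq Sig -> C).
Local Notation eval := (eval inc sc ac).

Definition succs (c : C) : seq C := flatten [seq sc c a | a <- enum Sig].

Definition expand (n : nat) (t : seq C) : seq C :=
  t ++ flatten (map succs t) ++ flatten [seq [seq ac c w | w <- words n] | c <- t].

Definition codes (n : nat) : seq C := eval (codesM n).

Definition closedb (t : seq C) : bool := all (fun d => has (inc d) t) (flatten (map succs t)).

Definition maximalb (t : seq C) (c : C) : bool := all (fun e => inc c e ==> inc e c) t.

Lemma eval_succsM c : eval (succsM c) = succs c.
Proof. by rewrite eval_bind eval_mapM. Qed.

Lemma codesS n : codes n.+1 = expand n.+1 (codes n).
Proof.
rewrite /codes /= eval_bind /expandM !(eval_bind, eval_mapM) /=.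
by congr (_ ++ flatten _ ++ flatten _); apply: eq_map => c; rewrite ?eval_succsM ?eval_mapM.
Qed.

Lemma eval_decomp_round n : eval (decomp_round n) =
  if closedb (codes n) then Some (filter (maximalb (codes n)) (codes n)) else None.
Proof.
rewrite /decomp_round eval_bind -/(codes n) /closedM eval_bind eval_bind eval_allM eval_mapM.
rewrite (eq_map eval_succsM); under eq_all => d do rewrite eval_hasM.
rewrite -/(closedb _); case: ifP => // _.
rewrite eval_bind eval_mapM filter_mask; congr (Some (mask _ _)); apply: eq_map => c.
by rewrite eval_allM /maximalb; apply: eq_all => e /=; case: (inc c e).
Qed.

Lemma eval_cover_round cy n : eval (cover_round cy n) =
  if eval (decomp_round n) is Some out then Some (has (inc cy) out) else None.
Proof.
by rewrite eval_bind; case: (eval (decomp_round n)) => // out; rewrite eval_bind eval_hasM.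
Qed.

End Values.
End Algorithm.
Arguments decomp_round {Sig C}.
Arguments cover_round {Sig C}.

Section Correctness.
Variables (X : Type) (Sig : finType) (step : Sig -> X -> X -> Prop) (le : X -> X -> Prop).
Hypothesis HV : very_wsts step le.
Variables (C : Type) (E : effective step le C) (x : X) (cx : C).
Hypothesis Ecx : seteq (den E cx) (fun y => le y x).

Local Notation den := (den E).
Local Notation succ := (succ E).
Local Notation accel := (accel E).
Local Notation cstepw := (cstepw step le).
Local Notation level := (level le).
Local Notation Dpost := (dc le (reach step x)).

Inductive generated : C -> Prop :=
| generated_cx : generated cx
| generated_succ c a d : generated c -> inlist d (succ c a) -> generated d
| generated_accel c w : generated c -> w <> [::] -> generated (accel c w).

Lemma den_down_closed c : down_closed le (den c).
Proof. by case: (den_ideal E c) => _ []. Qed.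

Lemma Dpost_step a y z : Dpost y -> step a y z -> Dpost z.
Proof.
move=> [r [[w xr] yr]] yz; have [w' [r' [rr' zr']]] := vwsts_monotone HV yz yr.
by exists r'; split=> //; exists (w ++ w'); apply: stepw_cat xr rr'.
Qed.

Lemma cstep_sub_Dpost a I J : sub I Dpost -> cstep step le a I J -> sub J Dpost.
Proof.
move=> IP IJ y; rewrite (cstepE HV IJ) => -[z [[u [Iu uz]] yz]].
have [r [xr zr]] := Dpost_step (IP _ Iu) uz.
by exists r; split=> //; exact: (le_trans HV yz zr).
Qed.

Lemma cstepw_sub_Dpost w I J : sub I Dpost -> cstepw w I J -> sub J Dpost.
Proof.
elim: w I => [|a w IH] I /= IP; first by move/seteq_eq <-.
by case=> K [IK KJ]; apply: IH KJ; apply: cstep_sub_Dpost IK.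
Qed.

Lemma generated_sub_Dpost c : generated c -> sub (den c) Dpost.
Proof.
elim=> {c} [|c a d _ cP cd|c w _ cP w0].
- by move=> y /Ecx yx; exists x; split=> //; exists [::].
- exact: cstep_sub_Dpost cP (succ_sound cd).
- have [grow stay] := accelP E c w0.
  have [g|ng] := classic (exists J, cstepw w (den c) J /\ strict (den c) J).
  + by move=> y /(grow g) [k [J [cJ Jy]]]; apply: cstepw_sub_Dpost cP cJ _ Jy.
  + by move=> y /(stay ng) /cP.
Qed.

Lemma succ_cover c a z : post step (den c) a z -> exists d, inlist d (succ c a) /\ den d z.
Proof.
move=> caz; have [J [cJ Jz]] := cstep_exists HV (den_ideal E c) caz.
by have [d [cd /seteq_eq dJ]] := succ_complete cJ; exists d; rewrite dJ.
Qed.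

Definition covered (t : seq C) (c : C) := exists e, inlist e t /\ sub (den c) (den e).

Definition closed_in (G t : seq C) :=
  forall g a d, inlist g G -> inlist d (succ g a) -> covered t d.

Lemma closed_cover G : (exists e, inlist e G /\ den e x) -> closed_in G G ->
  forall y, Dpost y -> exists g, inlist g G /\ den g y.
Proof.
move=> [e [eG ex]] Gclosed y [r [[w xr] yr]].
have reachG w' u v : stepw step w' u v -> (exists g, inlist g G /\ den g u) ->
    exists g, inlist g G /\ den g v.
  elim: w' u => [|a w' IH] u /=; first by move=> ->.
  move=> [u' [uu' u'v]] [g [gG gu]]; apply: IH u'v _.
  have [d [gd du']] := succ_cover (ex_intro _ u (conj gu uu')).
  by have [f [fG df]] := Gclosed g a d gG gd; exists f; split=> //; apply: df.
have [g [gG gr]] := reachG w x r xr (ex_intro _ e (conj eG ex)).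
by exists g; split=> //; apply: den_down_closed gr yr.
Qed.

Lemma covered_sub t t' c : (forall e, inlist e t -> inlist e t') -> covered t c -> covered t' c.
Proof. by move=> tt' [e [et ce]]; exists e; split; first apply: tt'. Qed.

(* [H] lists the ancestors of [c] in the tree of generated codes. *)
Definition good (H : seq C) (c : C) := exists G,
  [/\ forall g, inlist g G -> generated g, covered (G ++ H) c & closed_in G (G ++ H)].

Lemma good_weaken H c c' : sub (den c) (den c') -> good [::] c' -> good H c.
Proof.
move=> cc' [G [Ggen [e [eG c'e]] Gclosed]]; rewrite cats0 in eG Gclosed.
have GH f : inlist f G -> inlist f (G ++ H) by move=> fG; apply/inlist_cat; left.
exists G; split=> //; first by exists e; split; [apply: GH | move=> y /cc' /c'e].
by move=> g a d gG gd; apply: covered_sub GH (Gclosed g a d gG gd).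
Qed.

Lemma good_all H l : (forall d, inlist d l -> good H d) ->
  exists G, [/\ forall g, inlist g G -> generated g, closed_in G (G ++ H)
              & forall d, inlist d l -> covered (G ++ H) d].
Proof.
elim: l => [|d l IH] lgood; first by exists [::]; split=> [g []|g a d []|d []].
have [G1 [G1gen dG1 G1closed]] := lgood d (or_introl erefl).
have [G2 [G2gen G2closed lG2]] := IH (fun d' h => lgood d' (or_intror h)).
have sub1 f : inlist f (G1 ++ H) -> inlist f ((G1 ++ G2) ++ H).
  rewrite -catA => /inlist_cat [fG1|fH]; apply/inlist_cat; first by left.
  by right; apply/inlist_cat; right.
have sub2 f : inlist f (G2 ++ H) -> inlist f ((G1 ++ G2) ++ H).
  by rewrite -catA => fG2H; apply/inlist_cat; right.
exists (G1 ++ G2); split; first by move=> g /inlist_cat [/G1gen|/G2gen].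
  move=> g a d' /inlist_cat [gG1|gG2] gd'.
  - exact: covered_sub sub1 (G1closed g a d' gG1 gd').
  - exact: covered_sub sub2 (G2closed g a d' gG2 gd').
by move=> d' [<-|d'l]; [apply: covered_sub sub1 dG1 | apply: covered_sub sub2 (lG2 d' d'l)].
Qed.

Lemma inlist_succs c d : inlist d (succs succ c) <-> exists a, inlist d (succ c a).
Proof.
rewrite /succs inlist_flatten; split=> [[s [/inlist_map [a [_ ->]] ds]]|[a da]]; first by exists a.
exists (succ c a); split=> //; apply/inlist_map; exists a; split=> //.
by apply/inlistP; rewrite mem_enum.
Qed.

Lemma succ_chain_path (cc : nat -> C) : (forall k, exists a, inlist (cc k.+1) (succ (cc k) a)) ->
  forall i j, (i < j)%N -> exists u, u <> [::] /\ cstepw u (den (cc i)) (den (cc j)).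
Proof.
move=> ccS i; elim=> [//|j IH]; have [a ca] := ccS j.
have step1 : cstepw [:: a] (den (cc j)) (den (cc j.+1)).
  by exists (den (cc j.+1)); split; [exact: succ_sound ca | move=> y].
rewrite ltnS leq_eqVlt => /orP [/eqP ->|/IH [u [u0 iju]]]; first by exists [:: a].
by exists (u ++ [:: a]); split; [case: (u) | apply: cstepw_cat iju step1].
Qed.

Section Level.
Variable m : nat.

Definition bad (H : seq C) (c : C) := [/\ generated c, level m (den c) & ~ good H c].

Lemma bad_not_covered H c : bad H c -> ~ covered H c.
Proof. by case=> _ _ ngood cH; apply: ngood; exists [::]; split=> // g a d []. Qed.

Lemma bad_child H c : bad H c -> exists a d, inlist d (succ c a) /\ bad (rcons H c) d.
Proof.
case=> cgen cl ngood; apply: NNPP => nbad.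
have succs_good d : inlist d (succs succ c) -> good (rcons H c) d.
  move=> /inlist_succs [a cd]; apply: NNPP => ngd; apply: nbad; exists a, d; split=> //.
  by split=> //; [apply: generated_succ cgen cd | exact: (level_cstep HV (succ_sound cd) cl)].
have [G [Ggen Gclosed succsG]] := good_all succs_good.
have GHc f : inlist f (G ++ rcons H c) -> inlist f ((c :: G) ++ H).
  by rewrite -cats1 catA => /inlist_cat [fGH|[<-|[]]]; [right | left].
apply: ngood; exists (c :: G); split; first by move=> g [<-|/Ggen].
  by exists c; split; first left.
move=> g a d [<-|gG] gd; apply: covered_sub GHc _; last exact: Gclosed gG gd.
by apply: succsG; apply/inlist_succs; exists a.
Qed.

Lemma accel_above c d u : generated c -> level m (den c) -> u <> [::] ->
  cstepw u (den c) (den d) -> strict (den c) (den d) ->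
  [/\ generated (accel c u), level m.+1 (den (accel c u)) & sub (den d) (den (accel c u))].
Proof.
move=> cgen cl u0 cd sd.
have grows : exists J, cstepw u (den c) J /\ strict (den c) J by exists (den d).
split; [exact: generated_accel | exact: (level_winf HV cl (accelP E c u0) grows) |].
have [/(_ grows) /seteq_eq -> _] := accelP E c u0.
by move=> y dy; exists 1, (den d); rewrite /= cats0.
Qed.

(* An infinite branch of bad codes, none covered by its ancestors, contains
   [c_i] strictly below a descendant [c_j]; accelerating from [c_i] along the
   path to [c_j] then reaches level [m.+1] and makes [c_j] good. *)
Lemma good_level : (forall c, generated c -> level m.+1 (den c) -> good [::] c) ->
  forall c, generated c -> level m (den c) -> good [::] c.
Proof.
move=> good_up c cgen cl; apply: NNPP => ngood.
pose R (s s' : seq C * C) := s'.1 = rcons s.1 s.2 /\ exists a, inlist s'.2 (succ s.2 a).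
have next s : bad s.1 s.2 -> exists s', bad s'.1 s'.2 /\ R s s'.
  case: s => H d /bad_child [a [e [de bade]]].
  by exists (rcons H d, e); split=> //; split=> //; exists a.
have bad0 : bad [::] c by split.
have [s [_ sbad]] := @dependent_choice _ (fun s => bad s.1 s.2) R ([::], c) bad0 next.
have ancestors i j : (i < j)%N -> inlist (s i).2 (s j).1.
  elim: j => [//|j IH]; rewrite (proj1 (sbad j).2) -cats1 inlist_cat ltnS leq_eqVlt.
  by case/orP=> [/eqP ->|/IH]; [right; left | left].
have [i [j [ij sij]]] := vwsts_ideal_wqo HV (fun k => den_ideal E (s k).2).
have [u [u0 iju]] := succ_chain_path (fun k => proj2 (sbad k).2) ij.
have nsji : ~ sub (den (s j).2) (den (s i).2).
  by move=> sji; apply: bad_not_covered (sbad j).1 _; exists (s i).2; split=> //; apply: ancestors.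
have [igen il _] := (sbad i).1.
have [Kgen Kl jK] := accel_above igen il u0 iju (conj sij nsji).
by case: (sbad j).1 => _ _; apply; apply: good_weaken jK (good_up _ Kgen Kl).
Qed.

End Level.

Lemma good_cx : good [::] cx.
Proof.
have [N noN] := vwsts_levels HV.
suff all_good : forall k n, (N <= n + k)%N ->
    forall c, generated c -> level n (den c) -> good [::] c.
  exact: (all_good N 0 _ cx generated_cx (den_ideal E cx)).
elim=> [|k IH] n Nnk c cgen cl.
  by case: (noN (den c)); apply: level_le cl; rewrite addn0 in Nnk.
by apply: good_level cgen cl => d dgen dl; apply: IH dgen dl; rewrite addSnnS.
Qed.

Lemma closed_generated_cover : exists G,
  [/\ forall g, inlist g G -> generated g, exists e, inlist e G /\ den e x & closed_in G G].
Proof.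
have [G [Ggen [e [eG cxe]] Gclosed]] := good_cx; rewrite cats0 in eG Gclosed.
by exists G; split=> //; exists e; split=> //; apply/cxe/(Ecx x)/(le_refl HV).
Qed.

Local Notation ev := (eval (incl E) succ accel).
Local Notation codes := (codes cx (incl E) succ accel).

Lemma inlist_expand n t c : inlist c (expand succ accel n t) <->
  [\/ inlist c t, exists e a, inlist e t /\ inlist c (succ e a)
    | exists e w, [/\ inlist e t, w \in words Sig n & c = accel e w]].
Proof.
rewrite /expand !inlist_cat !inlist_flatten; split.
  case=> [ct|[[s [/inlist_map [e [et ->]] /inlist_succs [a ca]]]|[s [/inlist_map [e [et ->]]]]]].
  - by constructor 1.
  - by constructor 2; exists e, a.
  - by case/inlist_map=> w [/inlistP wn ->]; constructor 3; exists e, w.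
case=> [ct|[e [a [et ca]]]|[e [w [et wn ->]]]]; [by left | right; left | right; right].
  by exists (succs succ e); split; [apply/inlist_map; exists e | apply/inlist_succs; exists a].
exists [seq accel e w | w <- words Sig n]; split; apply/inlist_map; first by exists e.
by exists w; split=> //; apply/inlistP.
Qed.

Lemma codes_mono m n c : (m <= n)%N -> inlist c (codes m) -> inlist c (codes n).
Proof.
move=> /subnK <- cm; elim: (n - m) => [//|k IH].
by rewrite addSn codesS; apply/inlist_expand; constructor 1.
Qed.

Lemma cx_codes n : inlist cx (codes n).
Proof. by apply: (@codes_mono 0); first exact: leq0n; left. Qed.

Lemma codes_generated n c : inlist c (codes n) -> generated c.
Proof.
elim: n c => [|n IH] c; first by case=> [<-|[]]; constructor.
rewrite codesS => /inlist_expand [/IH //|[e [a [/IH egen ca]]]|[e [w [/IH egen wn ->]]]].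
  exact: generated_succ egen ca.
by apply: generated_accel egen _; move: wn; rewrite mem_words; case: (w).
Qed.

Lemma generated_codes c : generated c -> exists n, inlist c (codes n).
Proof.
elim=> {c} [|c a d _ [n cn] cd|c w _ [n cn] w0]; first by exists 0; left.
  by exists n.+1; rewrite codesS; apply/inlist_expand; constructor 2; exists c, a.
exists (maxn n (size w)).+1; rewrite codesS; apply/inlist_expand; constructor 3; exists c, w.
split=> //; first exact: codes_mono (leq_maxl n (size w)) cn.
by rewrite mem_words (leqW (leq_maxr n (size w))) andbT lt0n size_eq0; apply/eqP.
Qed.

Lemma codes_cover G : (forall g, inlist g G -> generated g) ->
  exists n, forall g, inlist g G -> inlist g (codes n).
Proof.
elim: G => [|g G IH] Ggen; first by exists 0.
have [n1 gn1] := generated_codes (Ggen g (or_introl erefl)).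
have [n2 Gn2] := IH (fun g' h => Ggen g' (or_intror h)).
exists (maxn n1 n2) => g' [<-|/Gn2]; last exact: codes_mono (leq_maxr n1 n2).
exact: codes_mono (leq_maxl n1 n2) gn1.
Qed.

Lemma closedbP t : closedb (incl E) succ t <-> closed_in t t.
Proof.
rewrite /closedb all_inlistP; split=> [tclosed g a d gt gd|tclosed d].
  have /has_inlistP [e [et /(inclP E) de]] : has (incl E d) t.
    by apply: tclosed; apply/inlist_flatten; exists (succs succ g); split;
      [apply/inlist_map; exists g | apply/inlist_succs; exists a].
  by exists e.
case/inlist_flatten=> s [/inlist_map [g [gt ->]] /inlist_succs [a gd]].
have [e [et de]] := tclosed g a d gt gd.
by apply/has_inlistP; exists e; split=> //; apply/(inclP E).
Qed.

Lemma maximalbP t c : maximalb (incl E) t c <-> maximal_in den t c.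
Proof.
rewrite /maximalb all_inlistP; split=> cmax e et.
  by move=> /(inclP E) ce; apply/(inclP E); apply: (implyP (cmax e et)).
by apply/implyP => /(inclP E) ce; apply/(inclP E); apply: cmax.
Qed.

Lemma decomp_round_sound n out : ev (decomp_round cx n) = Some out ->
  codes_idecomp le den Dpost out.
Proof.
rewrite eval_decomp_round; case: ifP => // /closedbP tclosed [<-].
have tcover : finite_ideal_cover le den (codes n) Dpost.
  split=> [c ct|]; first by split; [exact: den_ideal | exact/generated_sub_Dpost/codes_generated/ct].
  apply: closed_cover tclosed; exists cx; split; [exact: cx_codes | exact/(Ecx x)/(le_refl HV)].
split=> [d /inlist_filter [dt /maximalbP dmax]|I /(idecomp_maximal_in tcover) [e [et emax <-]]].
  exact: (maximal_in_idecomp tcover dt dmax).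
by exists e; split=> //; apply/inlist_filter; split=> //; apply/maximalbP.
Qed.

Lemma decomp_round_halts : exists N, ev (decomp_round cx N) <> None.
Proof.
have [G [Ggen Gx Gclosed]] := closed_generated_cover.
have [N GN] := codes_cover Ggen.
exists N; rewrite eval_decomp_round.
suff /closedbP -> : closed_in (codes N) (codes N) by [].
move=> g a d gN gd; have dgen := generated_succ (codes_generated gN) gd.
have [e [eG de]] := ideal_prime (den_ideal E d) (fun e _ => @den_down_closed e)
  (fun y dy => closed_cover Gx Gclosed (generated_sub_Dpost dgen dy)).
by exists e; split; first exact: GN.
Qed.

Section Coverability.
Variables (y : X) (cy : C).
Hypothesis Ecy : seteq (den cy) (fun z => le z y).

Lemma cover_round_sound n b : ev (cover_round cx cy n) = Some b ->
  (b <-> exists z, le y z /\ reach step x z).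
Proof.
rewrite eval_cover_round; case dn: (ev _) => [out|] // [<-].
have cover := codes_idecomp_cover (vwsts_wqo HV) (down_closed_dc HV (D := reach step x))
  (decomp_round_sound dn).
rewrite has_inlistP; split=> [[d [dout /(inclP E) cyd]]|[z [yz xz]]].
  have [z [xz yz]] : Dpost y by apply/cover; exists d; split=> //; apply/cyd/(Ecy y)/(le_refl HV).
  by exists z.
have [d [dout dy]] : exists d, inlist d out /\ den d y by apply/cover; exists z.
by exists d; split=> //; apply/(inclP E) => z' /(Ecy z') z'y; apply: den_down_closed dy z'y.
Qed.

Lemma cover_round_halts : exists N, ev (cover_round cx cy N) <> None.
Proof.
have [N dN] := decomp_round_halts.
by exists N; rewrite eval_cover_round; case: (ev _) dN.
Qed.

End Coverability.
End Correctness.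

Theorem theorem12 :
  (* one uniform algorithm computing the ideal decomposition of down(Post*(x)),
     from a code of the ideal down(x) *)
  (exists P : forall (Sig : finType) (C : Type), C -> prog Sig C (seq C),
     forall (X : Type) (Sig : finType) (step : Sig -> X -> X -> Prop)
            (le : X -> X -> Prop),
       very_wsts step le ->
       forall (C : Type) (E : effective step le C) (x : X) (cx : C),
         seteq (den E cx) (fun y => le y x) ->
         exists r, runs (incl E) (succ E) (accel E) (P Sig C cx) r /\
                   codes_idecomp le (den E) (dc le (reach step x)) r)
  /\
  (* in particular coverability is decidable *)
  (exists Q : forall (Sig : finType) (C : Type), C -> C -> prog Sig C bool,
     forall (X : Type) (Sig : finType) (step : Sig -> X -> X -> Prop)
            (le : X -> X -> Prop),
       very_wsts step le ->
       forall (C : Type) (E : effective step le C) (x y : X) (cx cy : C),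
         seteq (den E cx) (fun z => le z x) ->
         seteq (den E cy) (fun z => le z y) ->
         exists b, runs (incl E) (succ E) (accel E) (Q Sig C cx cy) b /\
                   (b = true <-> exists z, le y z /\ reach step x z)).
Proof.
split.
- exists (fun Sig C => @decomp_prog Sig C) => X Sig step le HV C E x cx Ecx.
  exact: runs_search_first (decomp_round_sound HV Ecx) (decomp_round_halts HV Ecx).
- exists (fun Sig C => @cover_prog Sig C) => X Sig step le HV C E x y cx cy Ecx Ecy.
  exact: runs_search_first (cover_round_sound HV Ecx Ecy) (cover_round_halts HV Ecx cy).
Qed.
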